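(* Let $R,LM,C,\widetilde C,Ceq,\widetilde{Ceq}$ be as below, assume all conditions (1.1)–(7b) listed below hold, and let $\sim,\simeq$ be as below. Then for all data in $C,\widetilde C$ (with $n=l(\Gamma_1)=l(\Gamma'_1)$ or $n=l(\Gamma)$): (1) if $(\Gamma_1,T)\sim(\Gamma'_1,T')$ and $(\Gamma_1,\Gamma_2)\sim(\Gamma'_1,\Gamma'_2)$, then $(\Gamma_1,T,t_{n+1}\Gamma_2)\sim(\Gamma'_1,T',t_{n+1}\Gamma'_2)$; (2) if $(\Gamma_1,T)\sim(\Gamma'_1,T')$ and $(\Gamma_1,\Gamma_2\vdash o:S)\simeq(\Gamma'_1,\Gamma'_2\vdash o':S')$, then $(\Gamma_1,T,t_{n+1}\Gamma_2\vdash t_{n+1}o:t_{n+1}S)\simeq(\Gamma'_1,T',t_{n+1}\Gamma'_2\vdash t_{n+1}o':t_{n+1}S')$; (3) if $(\Gamma_1\vdash r:T)\simeq(\Gamma'_1\vdash r':T')$ and $(\Gamma_1,T,\Gamma_2)\sim(\Gamma'_1,T',\Gamma'_2)$, then $(\Gamma_1,s_{n+1}(\Gamma_2[r/n+1]))\sim(\Gamma'_1,s_{n+1}(\Gamma'_2[r'/n+1]))$; (4) if $(\Gamma_1\vdash r:T)\simeq(\Gamma'_1\vdash r':T')$ and $(\Gamma_1,T,\Gamma_2\vdash o:S)\simeq(\Gamma'_1,T',\Gamma'_2\vdash o':S')$, then $(\Gamma_1,s_{n+1}(\Gamma_2[r/n+1])\vdash s_{n+1}(o[r/n+1]):s_{n+1}(S[r/n+1]))\simeq(\Gamma'_1,s_{n+1}(\Gamma'_2[r'/n+1])\vdash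 s_{n+1}(o'[r'/n+1]):s_{n+1}(S'[r'/n+1]))$; (5) if $(\Gamma,T)\sim(\Gamma',T')$, then $(\Gamma,T\vdash n+1:t_{n+1}T)\simeq(\Gamma',T'\vdash n+1:t_{n+1}T')$. Conditions (for all well-formed data, $n=l(\Gamma)$, $i=l(\Gamma_1)$): (1.1) $(\rhd)$; (1.2) $(\Gamma,T\rhd)\Rightarrow(\Gamma\rhd)$; (1.3) $(\Gamma\vdash r:R)\Rightarrow(\Gamma,R\rhd)$; (1.4) $(\Gamma,T\rhd)\wedge(\Gamma,\Delta\vdash r:R)\Rightarrow(\Gamma,T,t_{n+1}\Delta\vdash t_{n+1}r:t_{n+1}R)$; (1.5) $(\Gamma\vdash s:S)\wedge(\Gamma,S,\Delta\vdash r:R)\Rightarrow(\Gamma,s_{n+1}(\Delta[s/n+1])\vdash s_{n+1}(r[s/n+1]):s_{n+1}(R[s/n+1]))$; (1.6) $(\Gamma,T\rhd)\Rightarrow(\Gamma,T\vdash n+1:t_{n+1}T)$; (2a) $(\Gamma\vdash T=T')\Rightarrow(\Gamma,T\rhd)$; (2b) $(\Gamma,T\rhd)\Rightarrow(\Gamma\vdash T=T)$; (2c),(2d) symmetry and transitivity of $(\Gamma\vdash T=T')$; (3a) $(\Gamma\vdash o=o':T)\Rightarrow(\Gamma\vdash o:T)$; (3b) $(\Gamma\vdash o:T)\Rightarrow(\Gamma\vdash o=o:T)$; (3c),(3d) symmetry and transitivity of $(\Gamma\vdash o=o':T)$; (4a) $(\Gamma_1\vdash T=T')\wedge(\Gamma_1,T,\Gamma_2\vdash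 S=S')\Rightarrow(\Gamma_1,T',\Gamma_2\vdash S=S')$; (4b) $(\Gamma_1\vdash T=T')\wedge(\Gamma_1,T,\Gamma_2\vdash o=o':S)\Rightarrow(\Gamma_1,T',\Gamma_2\vdash o=o':S)$; (4c) $(\Gamma\vdash S=S')\wedge(\Gamma\vdash o=o':S)\Rightarrow(\Gamma\vdash o=o':S')$; (5a) $(\Gamma_1,T\rhd)\wedge(\Gamma_1,\Gamma_2\vdash S=S')\Rightarrow(\Gamma_1,T,t_{i+1}\Gamma_2\vdash t_{i+1}S=t_{i+1}S')$; (5b) $(\Gamma_1,T\rhd)\wedge(\Gamma_1,\Gamma_2\vdash o=o':S)\Rightarrow(\Gamma_1,T,t_{i+1}\Gamma_2\vdash t_{i+1}o=t_{i+1}o':t_{i+1}S)$; (6a) $(\Gamma_1,T,\Gamma_2\vdash S=S')\wedge(\Gamma_1\vdash r:T)\Rightarrow(\Gamma_1,s_{i+1}(\Gamma_2[r/i+1])\vdash s_{i+1}(S[r/i+1])=s_{i+1}(S'[r/i+1]))$; (6b) $(\Gamma_1,T,\Gamma_2\vdash o=o':S)\wedge(\Gamma_1\vdash r:T)\Rightarrow(\Gamma_1,s_{i+1}(\Gamma_2[r/i+1])\vdash s_{i+1}(o[r/i+1])=s_{i+1}(o'[r/i+1]):s_{i+1}(S[r/i+1]))$; (7a) $(\Gamma_1,T,\Gamma_2,S\rhd)\wedge(\Gamma_1\vdash r=r':T)\Rightarrow(\Gamma_1,s_{i+1}(\Gamma_2[r/i+1])\vdash s_{i+1}(S[r/i+1])=s_{i+1}(S[r'/i+1]))$;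 (7b) $(\Gamma_1,T,\Gamma_2\vdash o:S)\wedge(\Gamma_1\vdash r=r':T)\Rightarrow(\Gamma_1,s_{i+1}(\Gamma_2[r/i+1])\vdash s_{i+1}(o[r/i+1])=s_{i+1}(o[r'/i+1]):s_{i+1}(S[r/i+1]))$.
   Context: $[n]=\{1,\dots,n\}$. $R$ is a monad on Sets (unit $\eta$, Kleisli extension $\mathrm{bind}$), $LM$ a left $R$-module with action $\rho(f):LM(X)\to LM(Y)$ for $f:X\to R(Y)$. Elements of $Y$ are regarded in $R(Y)$ via $\eta_Y$; $E(f_1/1,\dots,f_m/m)$ is $\rho(f)(E)$ or $\mathrm{bind}(f)(E)$ with $f(i)=f_i$. For $E$ in $LM([m])$ or $R([m])$, $m\ge n$: $t_{n+1}E:=E(1/1,\dots,n/n,n+2/n+1,\dots,m+1/m)$; for $m\ge n+1$, $s\in R([n])$: $s_{n+1}(E[s/n+1]):=E(1/1,\dots,n/n,s/n+1,n+1/n+2,\dots,m-1/m)$; both applied componentwise to sequences. $C,\widetilde C,Ceq,\widetilde{Ceq}$ are subsets of $\coprod_n\prod_{j<n}LM([j])$, $\coprod_n(\prod_{j\le n}LM([j]))\times R([n])$, $\coprod_n(\prod_{j<n}LM([j]))\times LM([n])^2$, $\coprod_n(\prod_{j\le n}LM([j]))\times R([n])^2$. Contexts: $\Gamma=(T_1,\dots,T_n)$, $T_j\in LM([j-1])$, $l(\Gamma)=n$, $ft$ drops the last entry, commas concatenate. $(\Gamma\rhd)$: $\Gamma\in C$; $(\Gamma\vdash t:T)$: $(\Gamma,T,t)\in\widetilde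 C$; $(\Gamma\vdash S=S')$: $(\Gamma,S,S')\in Ceq$; $(\Gamma\vdash o=o':S)$: $(\Gamma,S,o,o')\in\widetilde{Ceq}$. $\sim$ on $C$: $(T_1,\dots,T_n)\sim(T'_1,\dots,T'_n)$ iff $n=0$ or ($ft$'s related and $(T_1,\dots,T_{n-1}\vdash T_n=T'_n)$); different lengths never related. $\simeq$ on $\widetilde C$: $(\Gamma\vdash o:S)\simeq(\Gamma'\vdash o':S')$ iff $(\Gamma,S)\sim(\Gamma',S')$ and $(\Gamma\vdash o=o':S)$. *)

From mathcomp Require Export all_boot.

Set Implicit Arguments.
Unset Strict Implicit.
Unset Printing Implicit Defensive.

(* Conventions: the finite set [n] = {1,...,n} is represented by the ordinal
   type 'I_n = {0,...,n-1}; the variable k of [n] is the ordinal k-1. *)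

Record monad := Monad {
  mon : Type -> Type;
  ret : forall X : Type, X -> mon X;
  bind : forall X Y : Type, (X -> mon Y) -> mon X -> mon Y;
  bind_ret_l : forall (X Y : Type) (f : X -> mon Y) (x : X), bind f (ret x) = f x;
  bind_ret_r : forall (X : Type) (m : mon X), bind (@ret X) m = m;
  bind_assoc : forall (X Y Z : Type) (f : X -> mon Y) (g : Y -> mon Z) (m : mon X),
      bind g (bind f m) = bind (fun x => bind g (f x)) m }.
Arguments ret {_ _} _.
Arguments bind {_ _ _} _ _.

Record lmodule (M : monad) := LModule {
  lm : Type -> Type;
  act : forall X Y : Type, (X -> mon M Y) -> lm X -> lm Y;
  act_ret : forall (X : Type) (E : lm X), act (fun x : X => ret x) E = E;
  act_comp : forall (X Y Z : Type) (f : X -> mon M Y) (g : Y -> mon M Z) (E : lm X),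
      act g (act f E) = act (fun x => bind g (f x)) E }.
Arguments act {_ _ _ _} _ _.

(* Contexts (T_1,...,T_n), T_j in LM([j-1]), as snoc-telescopes. *)
Inductive ctx (LM : Type -> Type) : nat -> Type :=
| cnil : ctx LM 0
| csnoc n : ctx LM n -> LM 'I_n -> ctx LM n.+1.
Arguments cnil {LM}.
Arguments csnoc {LM n} G T.

Fixpoint addr (n d : nat) : nat := match d with 0 => n | d'.+1 => (addr n d').+1 end.

(* Extensions Gamma_2 of a context of length n by d types: the j-th added
   type (j = 1..d) lies in LM([n+j-1]). *)
Inductive ext (LM : Type -> Type) (n : nat) : nat -> Type :=
| enil : ext LM n 0
| esnoc d : ext LM n d -> LM 'I_(addr n d) -> ext LM n d.+1.
Arguments enil {LM n}.
Arguments esnoc {LM n d} G T.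

Fixpoint capp (LM : Type -> Type) n d (G : ctx LM n) (D : ext LM n d) : ctx LM (addr n d) :=
  match D in ext _ _ d return ctx LM (addr n d) with
  | enil => G
  | esnoc d' D' E => csnoc (capp G D') E
  end.

Lemma addrSl n d : addr n.+1 d = (addr n d).+1.
Proof. by elim: d => //= d ->. Qed.

Lemma addrSl_pred n d : (addr n.+1 d).-1 = addr n d.
Proof. by rewrite addrSl. Qed.

Lemma addr_ge n d : n <= addr n d.
Proof. by elim: d => //= d IH; apply: leq_trans IH _. Qed.

Lemma addr_ltS n d : n < (addr n d).+1.
Proof. exact: addr_ge. Qed.

Lemma addr_posn n d : n < addr n.+1 d.
Proof. by rewrite addrSl; exact: addr_ge. Qed.

(* renaming for t_{n+1}: variable k |-> k (k <= n), k |-> k+1 (k >= n+1) *)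
Definition wk n d (j : 'I_(addr n d)) : 'I_(addr n.+1 d) :=
  cast_ord (esym (addrSl n d)) (lift (Ordinal (addr_ltS n d)) j).

(* the position n+1 (0-based: n) in [addr n.+1 d] *)
Definition posn n d : 'I_(addr n.+1 d) := Ordinal (addr_posn n d).

Section Ops.
Variables (M : monad) (L : lmodule M).
Local Notation R := (mon M).
Local Notation LM := (lm L).

(* substitution for s_{n+1}(_[s/n+1]):
   k |-> k (k <= n), n+1 |-> s (included in R([m-1])), k |-> k-1 (k >= n+2) *)
Definition sb n d (s : R 'I_n) (j : 'I_(addr n.+1 d)) : R 'I_(addr n d) :=
  match unlift (posn n d) j with
  | Some k => ret (cast_ord (addrSl_pred n d) k)
  | None => bind (fun i : 'I_n => ret (widen_ord (addr_ge n d) i)) s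
  end.

Definition tL n d (E : LM 'I_(addr n d)) : LM 'I_(addr n.+1 d) :=
  act (fun j => ret (wk j)) E.
Definition tR n d (E : R 'I_(addr n d)) : R 'I_(addr n.+1 d) :=
  bind (fun j => ret (wk j)) E.

Definition sL n d (s : R 'I_n) (E : LM 'I_(addr n.+1 d)) : LM 'I_(addr n d) :=
  act (@sb n d s) E.
Definition sR n d (s : R 'I_n) (E : R 'I_(addr n.+1 d)) : R 'I_(addr n d) :=
  bind (@sb n d s) E.

Fixpoint text n d (D : ext LM n d) : ext LM n.+1 d :=
  match D in ext _ _ d return ext LM n.+1 d with
  | enil => enil
  | esnoc d' D' E => esnoc (text D') (@tL n d' E)
  end.

Fixpoint sext n d (s : R 'I_n) (D : ext LM n.+1 d) : ext LM n d :=
  match D in ext _ _ d return ext LM n d with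
  | enil => enil
  | esnoc d' D' E => esnoc (sext s D') (@sL n d' s E)
  end.

Variables (C : forall n, ctx LM n -> Prop)
          (Ct : forall n, ctx LM n -> LM 'I_n -> R 'I_n -> Prop)
          (Ceq : forall n, ctx LM n -> LM 'I_n -> LM 'I_n -> Prop).
Variable (Ceqt : forall n, ctx LM n -> LM 'I_n -> R 'I_n -> R 'I_n -> Prop).

Inductive simc : forall n, ctx LM n -> ctx LM n -> Prop :=
| simc0 : C cnil -> simc cnil cnil
| simcS n (G G' : ctx LM n) (T T' : LM 'I_n) :
    C (csnoc G T) -> C (csnoc G' T') ->
    simc G G' -> Ceq G T T' -> simc (csnoc G T) (csnoc G' T').

Definition simt n (G : ctx LM n) (S : LM 'I_n) (o : R 'I_n)
                  (G' : ctx LM n) (S' : LM 'I_n) (o' : R 'I_n) : Prop :=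
  [/\ Ct G S o, Ct G' S' o', simc (csnoc G S) (csnoc G' S') & Ceqt G S o o'].

End Ops.

From Pilot Require Import Defs.

Set Implicit Arguments.
Unset Strict Implicit.
Unset Printing Implicit Defensive.

(* Each clause is proved by induction along the common extension Gamma_2 of
   the two related contexts: the new last types are well formed and equal by
   the weakening conditions (1.4), (5a), (5b), resp. the substitution
   conditions (1.5), (6a), (6b).  For substitution the two sides are
   substituted by different terms r and r'; they are bridged through
   s(S[r]) = s(S'[r]) = s(S'[r']), the second step being the congruence
   conditions (7a), (7b). *)

Section Telescopes.
Variable LM : Type -> Type.

Lemma ext_ind2 n (P : forall d, ext LM n d -> ext LM n d -> Prop) :
  P 0 enil enil ->
  (forall d D D' T T', P d D D' -> P d.+1 (esnoc D T) (esnoc D' T')) ->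
  forall d D D', P d D D'.
Proof.
move=> P0 PS d D; elim: D => [|k D IH T] D'.
- refine (match D' in ext _ _ k return
            (match k return ext LM n k -> Prop with
             | 0 => P 0 enil
             | _ => fun _ => True
             end D')
          with enil => P0 | _ => I end).
- refine (match D' in ext _ _ j return
            (match j return ext LM n j -> Prop with
             | 0 => fun _ => True
             | j.+1 => fun E =>
                 forall D T, (forall D', P j D D') -> P j.+1 (esnoc D T) E
             end D')
          with
          | enil => I
          | esnoc _ D' T' => fun D T IH => PS _ _ _ _ _ (IH D')
          end D T IH).
Qed.

Definition cinit n (G : ctx LM n) : ctx LM n.-1 :=
  match G with cnil => cnil | csnoc _ G _ => G end.

Definition clast n (G : ctx LM n.+1) : LM 'I_n :=
  match G in ctx _ k return (if k is k'.+1 then LM 'I_k' else unit) with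
  | cnil => tt
  | csnoc _ _ T => T
  end.

End Telescopes.

Section Judgements.
Variables (M : monad) (L : lmodule M).
Local Notation LM := (lm L).
Variables (C : forall n, ctx LM n -> Prop)
          (Ct : forall n, ctx LM n -> LM 'I_n -> mon M 'I_n -> Prop)
          (Ceq : forall n, ctx LM n -> LM 'I_n -> LM 'I_n -> Prop)
          (Ceqt : forall n, ctx LM n -> LM 'I_n -> mon M 'I_n -> mon M 'I_n -> Prop).
Local Notation simc := (simc C Ceq).
Local Notation simt := (simt C Ct Ceq Ceqt).

Lemma simc_csnocP n (G G' : ctx LM n) T T' :
  simc (csnoc G T) (csnoc G' T') ->
  [/\ C (csnoc G T), C (csnoc G' T'), simc G G' & Ceq G T T'].
Proof.
move=> H.
refine (match H in @Defs.simc _ _ _ _ k G1 G1' return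
  (match G1 in ctx _ k return ctx LM k -> Prop with
   | cnil => fun _ => True
   | csnoc k G2 T2 => fun G1' =>
       [/\ C (csnoc G2 T2), C G1', simc G2 (cinit G1') & Ceq G2 T2 (clast G1')]
   end G1')
  with simc0 _ => I | simcS _ _ _ _ _ CT CT' HG HT => And4 CT CT' HG HT end).
Qed.

Hypothesis C_of_Ct : forall n (G : ctx LM n) S r, Ct G S r -> C (csnoc G S).
Hypothesis Ct_weaken : forall n d (G : ctx LM n) T (D : ext LM n d) S r,
  C (csnoc G T) -> Ct (capp G D) S r -> Ct (capp (csnoc G T) (text D)) (tL S) (tR r).
Hypothesis Ct_subst : forall n d (G : ctx LM n) S s (D : ext LM n.+1 d) Q r,
  Ct G S s -> Ct (capp (csnoc G S) D) Q r -> Ct (capp G (sext s D)) (sL s Q) (sR s r).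
Hypothesis Ct_var : forall n (G : ctx LM n) T,
  C (csnoc G T) -> Ct (csnoc G T) (@tL _ L n 0 T) (ret ord_max).

Hypothesis C_of_Ceq : forall n (G : ctx LM n) T T', Ceq G T T' -> C (csnoc G T).
Hypothesis Ceq_refl : forall n (G : ctx LM n) T, C (csnoc G T) -> Ceq G T T.
Hypothesis Ceq_sym : forall n (G : ctx LM n) T T', Ceq G T T' -> Ceq G T' T.
Hypothesis Ceq_trans : forall n (G : ctx LM n) T T' T'',
  Ceq G T T' -> Ceq G T' T'' -> Ceq G T T''.

Hypothesis Ct_of_Ceqt : forall n (G : ctx LM n) T o o', Ceqt G T o o' -> Ct G T o.
Hypothesis Ceqt_refl : forall n (G : ctx LM n) T o, Ct G T o -> Ceqt G T o o.
Hypothesis Ceqt_sym : forall n (G : ctx LM n) T o o', Ceqt G T o o' -> Ceqt G T o' o.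
Hypothesis Ceqt_trans : forall n (G : ctx LM n) T o o' o'',
  Ceqt G T o o' -> Ceqt G T o' o'' -> Ceqt G T o o''.

Hypothesis Ceq_weaken : forall n d (G1 : ctx LM n) T (G2 : ext LM n d) S S',
  C (csnoc G1 T) -> Ceq (capp G1 G2) S S' ->
  Ceq (capp (csnoc G1 T) (text G2)) (tL S) (tL S').
Hypothesis Ceqt_weaken : forall n d (G1 : ctx LM n) T (G2 : ext LM n d) S o o',
  C (csnoc G1 T) -> Ceqt (capp G1 G2) S o o' ->
  Ceqt (capp (csnoc G1 T) (text G2)) (tL S) (tR o) (tR o').
Hypothesis Ceq_subst : forall n d (G1 : ctx LM n) T (G2 : ext LM n.+1 d) S S' r,
  Ceq (capp (csnoc G1 T) G2) S S' -> Ct G1 T r ->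
  Ceq (capp G1 (sext r G2)) (sL r S) (sL r S').
Hypothesis Ceqt_subst : forall n d (G1 : ctx LM n) T (G2 : ext LM n.+1 d) S o o' r,
  Ceqt (capp (csnoc G1 T) G2) S o o' -> Ct G1 T r ->
  Ceqt (capp G1 (sext r G2)) (sL r S) (sR r o) (sR r o').
Hypothesis Ceq_subst_eq : forall n d (G1 : ctx LM n) T (G2 : ext LM n.+1 d) S r r',
  C (csnoc (capp (csnoc G1 T) G2) S) -> Ceqt G1 T r r' ->
  Ceq (capp G1 (sext r G2)) (sL r S) (sL r' S).
Hypothesis Ceqt_subst_eq : forall n d (G1 : ctx LM n) T (G2 : ext LM n.+1 d) S o r r',
  Ct (capp (csnoc G1 T) G2) S o -> Ceqt G1 T r r' ->
  Ceqt (capp G1 (sext r G2)) (sL r S) (sR r o) (sR r' o).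

Lemma C_weaken n d (G1 : ctx LM n) T (G2 : ext LM n d) S :
  C (csnoc G1 T) -> C (csnoc (capp G1 G2) S) ->
  C (csnoc (capp (csnoc G1 T) (text G2)) (tL S)).
Proof. by move=> CT /Ceq_refl CS; apply: C_of_Ceq (Ceq_weaken CT CS). Qed.

Lemma C_subst n d (G1 : ctx LM n) T r (G2 : ext LM n.+1 d) S :
  Ct G1 T r -> C (csnoc (capp (csnoc G1 T) G2) S) ->
  C (csnoc (capp G1 (sext r G2)) (sL r S)).
Proof. by move=> Ctr /Ceq_refl CS; apply: C_of_Ceq (Ceq_subst CS Ctr). Qed.

Lemma Ceq_subst_cong n d (G1 : ctx LM n) T r r' (G2 : ext LM n.+1 d) S S' :
  Ct G1 T r -> Ceqt G1 T r r' -> Ceq (capp (csnoc G1 T) G2) S S' ->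
  Ceq (capp G1 (sext r G2)) (sL r S) (sL r' S').
Proof.
move=> Ctr Err' ESS'; apply: Ceq_trans (Ceq_subst ESS' Ctr) _.
exact: Ceq_subst_eq (C_of_Ceq (Ceq_sym ESS')) Err'.
Qed.

Lemma Ceqt_subst_cong n d (G1 : ctx LM n) T r r' (G2 : ext LM n.+1 d) S o o' :
  Ct G1 T r -> Ceqt G1 T r r' -> Ceqt (capp (csnoc G1 T) G2) S o o' ->
  Ceqt (capp G1 (sext r G2)) (sL r S) (sR r o) (sR r' o').
Proof.
move=> Ctr Err' Eoo'; apply: Ceqt_trans (Ceqt_subst Eoo' Ctr) _.
exact: Ceqt_subst_eq (Ct_of_Ceqt (Ceqt_sym Eoo')) Err'.
Qed.

Lemma simc_weaken n d (G1 G1' : ctx LM n) T T' (G2 G2' : ext LM n d) :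
  simc (csnoc G1 T) (csnoc G1' T') -> simc (capp G1 G2) (capp G1' G2') ->
  simc (capp (csnoc G1 T) (text G2)) (capp (csnoc G1' T') (text G2')).
Proof.
move=> HT; have [CT CT' _ _] := simc_csnocP HT.
move: d G2 G2'; apply: ext_ind2 => [_ //|d D D' S S' IH /=].
case/simc_csnocP=> CS CS' HDD' ESS'.
by apply: simcS; [apply: C_weaken | apply: C_weaken | apply: IH | apply: Ceq_weaken].
Qed.

Lemma simc_subst n d (G1 G1' : ctx LM n) T T' r r' (G2 G2' : ext LM n.+1 d) :
  simt G1 T r G1' T' r' ->
  simc (capp (csnoc G1 T) G2) (capp (csnoc G1' T') G2') ->
  simc (capp G1 (sext r G2)) (capp G1' (sext r' G2')).
Proof.
case=> Ctr Ctr' _ Err'; move: d G2 G2'.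
apply: ext_ind2 => [/simc_csnocP[] //|d D D' S S' IH /=].
case/simc_csnocP=> CS CS' HDD' ESS'.
apply: simcS.
- exact: C_subst CS.
- exact: C_subst CS'.
- exact: IH.
- exact: Ceq_subst_cong ESS'.
Qed.

Lemma simt_weaken n d (G1 G1' : ctx LM n) T T' (G2 G2' : ext LM n d) S S' o o' :
  simc (csnoc G1 T) (csnoc G1' T') ->
  simt (capp G1 G2) S o (capp G1' G2') S' o' ->
  simt (capp (csnoc G1 T) (text G2)) (tL S) (tR o)
       (capp (csnoc G1' T') (text G2')) (tL S') (tR o').
Proof.
move=> HT [Cto Cto' HS Eoo']; have [CT CT' _ _] := simc_csnocP HT.
split; [exact: Ct_weaken | exact: Ct_weaken | | exact: Ceqt_weaken].
exact: (simc_weaken (G2 := esnoc G2 S) (G2' := esnoc G2' S')).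
Qed.

Lemma simt_subst n d (G1 G1' : ctx LM n) T T' r r' (G2 G2' : ext LM n.+1 d) S S' o o' :
  simt G1 T r G1' T' r' ->
  simt (capp (csnoc G1 T) G2) S o (capp (csnoc G1' T') G2') S' o' ->
  simt (capp G1 (sext r G2)) (sL r S) (sR r o)
       (capp G1' (sext r' G2')) (sL r' S') (sR r' o').
Proof.
move=> Hr [Cto Cto' HS Eoo']; have [Ctr Ctr' _ Err'] := Hr.
split; [exact: Ct_subst Cto | exact: Ct_subst Cto' | | exact: Ceqt_subst_cong Ctr Err' Eoo'].
exact: (simc_subst (G2 := esnoc G2 S) (G2' := esnoc G2' S') Hr HS).
Qed.

Lemma simt_var n (G G' : ctx LM n) T T' :
  simc (csnoc G T) (csnoc G' T') ->
  simt (csnoc G T) (@tL _ L n 0 T) (ret ord_max)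
       (csnoc G' T') (@tL _ L n 0 T') (ret ord_max).
Proof.
move=> HT; have [CT CT' _ ETT'] := simc_csnocP HT.
have Ctv := Ct_var CT; have Ctv' := Ct_var CT'.
split=> //; last exact: Ceqt_refl.
apply: simcS => //; [exact: C_of_Ct Ctv | exact: C_of_Ct Ctv' |].
exact: (Ceq_weaken (G2 := enil) CT ETT').
Qed.

End Judgements.

Theorem lemma6p6 (M : monad) (L : lmodule M)
  (C : forall n, ctx (lm L) n -> Prop)
  (Ct : forall n, ctx (lm L) n -> lm L 'I_n -> mon M 'I_n -> Prop)
  (Ceq : forall n, ctx (lm L) n -> lm L 'I_n -> lm L 'I_n -> Prop)
  (Ceqt : forall n, ctx (lm L) n -> lm L 'I_n -> mon M 'I_n -> mon M 'I_n -> Prop)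
  (* (1.1) *)
  (h1_1 : C _ cnil)
  (* (1.2) *)
  (h1_2 : forall n (G : ctx (lm L) n) T, C _ (csnoc G T) -> C _ G)
  (* (1.3) *)
  (h1_3 : forall n (G : ctx (lm L) n) S r, Ct _ G S r -> C _ (csnoc G S))
  (* (1.4) *)
  (h1_4 : forall n d (G : ctx (lm L) n) T (D : ext (lm L) n d) S r,
      C _ (csnoc G T) -> Ct _ (capp G D) S r ->
      Ct _ (capp (csnoc G T) (text D)) (tL S) (tR r))
  (* (1.5) *)
  (h1_5 : forall n d (G : ctx (lm L) n) S s (D : ext (lm L) n.+1 d) Q r,
      Ct _ G S s -> Ct _ (capp (csnoc G S) D) Q r ->
      Ct _ (capp G (sext s D)) (sL s Q) (sR s r))
  (* (1.6) *)
  (h1_6 : forall n (G : ctx (lm L) n) T,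
      C _ (csnoc G T) -> Ct _ (csnoc G T) (@tL _ L n 0 T) (ret ord_max))
  (* (2a)-(2d) *)
  (h2a : forall n (G : ctx (lm L) n) T T', Ceq _ G T T' -> C _ (csnoc G T))
  (h2b : forall n (G : ctx (lm L) n) T, C _ (csnoc G T) -> Ceq _ G T T)
  (h2c : forall n (G : ctx (lm L) n) T T', Ceq _ G T T' -> Ceq _ G T' T)
  (h2d : forall n (G : ctx (lm L) n) T T' T'',
      Ceq _ G T T' -> Ceq _ G T' T'' -> Ceq _ G T T'')
  (* (3a)-(3d) *)
  (h3a : forall n (G : ctx (lm L) n) T o o', Ceqt _ G T o o' -> Ct _ G T o)
  (h3b : forall n (G : ctx (lm L) n) T o, Ct _ G T o -> Ceqt _ G T o o)
  (h3c : forall n (G : ctx (lm L) n) T o o', Ceqt _ G T o o' -> Ceqt _ G T o' o)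
  (h3d : forall n (G : ctx (lm L) n) T o o' o'',
      Ceqt _ G T o o' -> Ceqt _ G T o' o'' -> Ceqt _ G T o o'')
  (* (4a) *)
  (h4a : forall n d (G1 : ctx (lm L) n) T T' (G2 : ext (lm L) n.+1 d) S S',
      Ceq _ G1 T T' -> Ceq _ (capp (csnoc G1 T) G2) S S' ->
      Ceq _ (capp (csnoc G1 T') G2) S S')
  (* (4b) *)
  (h4b : forall n d (G1 : ctx (lm L) n) T T' (G2 : ext (lm L) n.+1 d) S o o',
      Ceq _ G1 T T' -> Ceqt _ (capp (csnoc G1 T) G2) S o o' ->
      Ceqt _ (capp (csnoc G1 T') G2) S o o')
  (* (4c) *)
  (h4c : forall n (G : ctx (lm L) n) S S' o o',
      Ceq _ G S S' -> Ceqt _ G S o o' -> Ceqt _ G S' o o')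
  (* (5a) *)
  (h5a : forall n d (G1 : ctx (lm L) n) T (G2 : ext (lm L) n d) S S',
      C _ (csnoc G1 T) -> Ceq _ (capp G1 G2) S S' ->
      Ceq _ (capp (csnoc G1 T) (text G2)) (tL S) (tL S'))
  (* (5b) *)
  (h5b : forall n d (G1 : ctx (lm L) n) T (G2 : ext (lm L) n d) S o o',
      C _ (csnoc G1 T) -> Ceqt _ (capp G1 G2) S o o' ->
      Ceqt _ (capp (csnoc G1 T) (text G2)) (tL S) (tR o) (tR o'))
  (* (6a) *)
  (h6a : forall n d (G1 : ctx (lm L) n) T (G2 : ext (lm L) n.+1 d) S S' r,
      Ceq _ (capp (csnoc G1 T) G2) S S' -> Ct _ G1 T r ->
      Ceq _ (capp G1 (sext r G2)) (sL r S) (sL r S'))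
  (* (6b) *)
  (h6b : forall n d (G1 : ctx (lm L) n) T (G2 : ext (lm L) n.+1 d) S o o' r,
      Ceqt _ (capp (csnoc G1 T) G2) S o o' -> Ct _ G1 T r ->
      Ceqt _ (capp G1 (sext r G2)) (sL r S) (sR r o) (sR r o'))
  (* (7a) *)
  (h7a : forall n d (G1 : ctx (lm L) n) T (G2 : ext (lm L) n.+1 d) S r r',
      C _ (csnoc (capp (csnoc G1 T) G2) S) -> Ceqt _ G1 T r r' ->
      Ceq _ (capp G1 (sext r G2)) (sL r S) (sL r' S))
  (* (7b) *)
  (h7b : forall n d (G1 : ctx (lm L) n) T (G2 : ext (lm L) n.+1 d) S o r r',
      Ct _ (capp (csnoc G1 T) G2) S o -> Ceqt _ G1 T r r' ->
      Ceqt _ (capp G1 (sext r G2)) (sL r S) (sR r o) (sR r' o)) :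
  (* (1) *)
  (forall n d (G1 G1' : ctx (lm L) n) T T' (G2 G2' : ext (lm L) n d),
      simc C Ceq (csnoc G1 T) (csnoc G1' T') ->
      simc C Ceq (capp G1 G2) (capp G1' G2') ->
      simc C Ceq (capp (csnoc G1 T) (text G2)) (capp (csnoc G1' T') (text G2'))) /\
  (* (2) *)
  (forall n d (G1 G1' : ctx (lm L) n) T T' (G2 G2' : ext (lm L) n d) S S' o o',
      simc C Ceq (csnoc G1 T) (csnoc G1' T') ->
      simt C Ct Ceq Ceqt (capp G1 G2) S o (capp G1' G2') S' o' ->
      simt C Ct Ceq Ceqt (capp (csnoc G1 T) (text G2)) (tL S) (tR o)
                         (capp (csnoc G1' T') (text G2')) (tL S') (tR o')) /\
  (* (3) *)
  (forall n d (G1 G1' : ctx (lm L) n) T T' r r' (G2 G2' : ext (lm L) n.+1 d),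
      simt C Ct Ceq Ceqt G1 T r G1' T' r' ->
      simc C Ceq (capp (csnoc G1 T) G2) (capp (csnoc G1' T') G2') ->
      simc C Ceq (capp G1 (sext r G2)) (capp G1' (sext r' G2'))) /\
  (* (4) *)
  (forall n d (G1 G1' : ctx (lm L) n) T T' r r' (G2 G2' : ext (lm L) n.+1 d) S S' o o',
      simt C Ct Ceq Ceqt G1 T r G1' T' r' ->
      simt C Ct Ceq Ceqt (capp (csnoc G1 T) G2) S o (capp (csnoc G1' T') G2') S' o' ->
      simt C Ct Ceq Ceqt (capp G1 (sext r G2)) (sL r S) (sR r o)
                         (capp G1' (sext r' G2')) (sL r' S') (sR r' o')) /\
  (* (5) *)
  (forall n (G G' : ctx (lm L) n) T T',
      simc C Ceq (csnoc G T) (csnoc G' T') ->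
      simt C Ct Ceq Ceqt (csnoc G T) (@tL _ L n 0 T) (ret ord_max)
                         (csnoc G' T') (@tL _ L n 0 T') (ret ord_max)).

Proof.
split; first exact: simc_weaken h2a h2b h5a.
split; first exact: simt_weaken h1_4 h2a h2b h5a h5b.
split; first exact: simc_subst h2a h2b h2c h2d h6a h7a.
split; first exact: simt_subst h1_5 h2a h2b h2c h2d h3a h3c h3d h6a h6b h7a h7b.
exact: simt_var h1_3 h1_6 h3b h5a.
Qed.
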